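(* An ordering of the features by modification cost does not in general determine which recourse is ideal. Precisely: there exist - a finite feature set $\mathcal{F}$, - a finite set $\mathcal{R}$ of pairwise disjoint nonempty recourses $R\subseteq\mathcal{F}$, - a recourse $R\in\mathcal{R}$, and - two strength assignments $\beta,\beta':\mathcal{F}\to\mathbb{R}$ that induce the same ordering of $\mathcal{F}$ (that is, $\beta_f<\beta_g \iff \beta'_f<\beta'_g$ for all $f,g\in\mathcal{F}$), such that $R$ is ideal with respect to $\mathcal{R}$ under $\beta$ but not ideal with respect to $\mathcal{R}$ under $\beta'$.
   Context: Let $\mathcal{F}$ be a finite set of features. A strength assignment is a function $\beta:\mathcal{F}\to\mathbb{R}$, written $f\mapsto\beta_f$. The cost of modifying feature $f$ is $\mathrm{Cost}(f)=-\beta_f$. For distinct $f,g\in\mathcal{F}$, the probability that $f$ is easier to modify than $g$ is given by the Bradley–Terry model: $$p_{f>g}=\frac{e^{\beta_f}}{e^{\beta_f}+e^{\beta_g}}.$$ A recourse is a nonempty subset $R\subseteq\mathcal{F}$ (the set of features it modifies). For disjoint recourses $R_1,R_2$ with $|R_1|=m$ and $|R_2|=n$, the probability that $R_1$ is easier to implement than $R_2$ is $$\rho_{R_1>R_2}=\frac{1}{mn}\sum_{f\in R_1,\,g\in R_2}p_{f>g}.$$ Given a finite set $\mathcal{R}$ of pairwise disjoint candidate recourses (for the same data instance) and $R\in\mathcal{R}$, $R$ is ideal with respect to $\mathcal{R}$ under $\beta$ if there is no $R'\in\mathcal{R}\setminus\{R\}$ with $\rho_{R>R'}<\rho_{R'>R}$.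 Otherwise $R$ is non-ideal. *)

From HB Require Import structures.
From mathcomp Require Import all_boot all_order all_algebra.
From mathcomp Require Import Rstruct.
From Stdlib Require Import Reals.
Set Implicit Arguments. Unset Strict Implicit. Unset Printing Implicit Defensive.
Import Order.TTheory GRing.Theory Num.Theory.
Local Open Scope ring_scope.

(* Bradley--Terry probability that f is easier to modify than g under beta. *)
Definition pBT (F : finType) (beta : F -> R) (f g : F) : R :=
  exp (beta f) / (exp (beta f) + exp (beta g)).

Definition rhoR (F : finType) (beta : F -> R) (R1 R2 : {set F}) : R :=
  (\sum_(f in R1) \sum_(g in R2) pBT beta f g) / (#|R1|%:R * #|R2|%:R).

Definition ideal (F : finType) (beta : F -> R) (Rs : {set {set F}}) (R0 : {set F}) : Prop :=
  ~ (exists R', R' \in Rs /\ R' != R0 /\ rhoR beta R0 R' < rhoR beta R' R0).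

(* Since p(f>g) + p(g>f) = 1, also rho(A,B) + rho(B,A) = 1 for nonempty A, B,
   so with only two candidates {i} and {j,k}, the recourse {i} is ideal iff
   rho({i},{j,k}) >= 1/2.  Clearing denominators with weights e^beta, this is
   e^(2 beta_i) >= e^(beta_j) e^(beta_k), i.e. 2 beta_i >= beta_j + beta_k: a
   condition on the values of beta, not on their order.  The strengths
   (0, 1, -2) and (0, 2, -1) order the three features alike, yet only the
   first satisfies it. *)

From HB Require Import structures.
From mathcomp Require Import all_boot all_order all_algebra.
From mathcomp Require Import Rstruct.
From Stdlib Require Import Reals.
From mathcomp Require Import ring lra.
Import Order.TTheory GRing.Theory Num.Theory.
Local Open Scope ring_scope.

Lemma mean_shares_lt_half (K : realFieldType) (a b c : K) : 0 < a -> 0 < b -> 0 < c ->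
  ((a / (a + b) + a / (a + c)) / 2 < 2^-1) = (a * a < b * c).
Proof.
move=> a0 b0 c0; rewrite -subr_lt0 -[in RHS]subr_lt0.
have ab0 : a + b != 0 by rewrite gt_eqF ?addr_gt0.
have ac0 : a + c != 0 by rewrite gt_eqF ?addr_gt0.
have -> : (a / (a + b) + a / (a + c)) / 2 - 2^-1
          = (a * a - b * c) / (2 * ((a + b) * (a + c))).
  by field; rewrite ab0 ac0.
by rewrite pmulr_llt0 // invr_gt0 !mulr_gt0 ?addr_gt0.
Qed.

Lemma exp_gt0 (t : R) : 0 < exp t.
Proof. exact/RltP/exp_pos. Qed.

Lemma ltr_exp (s t : R) : (exp s < exp t) = (s < t).
Proof. by apply/RltP/RltP; [exact: exp_lt_inv | exact: exp_increasing]. Qed.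

Lemma expD (s t : R) : exp (s + t) = exp s * exp t.
Proof. exact: exp_plus. Qed.

Section BradleyTerry.
Variables (F : finType) (beta : F -> R).

Lemma pBTE f g : pBT beta f g = exp (beta f) / (exp (beta f) + exp (beta g)).
Proof. by []. Qed.

Lemma rhoRE (A B : {set F}) :
  rhoR beta A B = (\sum_(f in A) \sum_(g in B) pBT beta f g) / (#|A|%:R * #|B|%:R).
Proof. by []. Qed.

Lemma pBTC f g : pBT beta f g + pBT beta g f = 1.
Proof.
rewrite !pBTE [exp (beta g) + _]addrC -mulrDl divff //.
by rewrite gt_eqF // addr_gt0 ?exp_gt0.
Qed.

Lemma rhoRC (A B : {set F}) : A != set0 -> B != set0 ->
  rhoR beta A B + rhoR beta B A = 1.
Proof.
rewrite -!card_gt0 => A0 B0.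
rewrite !rhoRE (exchange_big _ _ (index_enum F)) [(#|B|%:R * _)]mulrC -mulrDl.
rewrite -big_split /=.
under eq_bigr => f _ do rewrite -big_split /=.
under eq_bigr => f _ do under eq_bigr => g _ do rewrite pBTC.
under eq_bigr => f _ do rewrite sumr_const.
rewrite sumr_const -[_ *+ #|B|]mulr_natr divff // mulf_neq0 // pnatr_eq0 -lt0n //.
Qed.

Lemma rhoR_lt_swap (A B : {set F}) : A != set0 -> B != set0 ->
  (rhoR beta A B < rhoR beta B A) = (rhoR beta A B < 2^-1).
Proof.
move=> A0 B0; have sum1 := @rhoRC A B A0 B0.
by apply/idP/idP => ?; lra.
Qed.

Lemma rhoR_set1_set2 i j k : j != k ->
  rhoR beta [set i] [set j; k] = (pBT beta i j + pBT beta i k) / 2.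
Proof.
move=> njk; rewrite rhoRE big_set1 big_setU1 ?inE // big_set1 cards1 cards2 njk.
by rewrite mul1r.
Qed.

Lemma pBT_set1_set2_lt_half i j k :
  ((pBT beta i j + pBT beta i k) / 2 < 2^-1) = (2 * beta i < beta j + beta k).
Proof.
rewrite !pBTE -[X in _ = X]ltr_exp mulr_natl mulr2n !expD.
exact: mean_shares_lt_half (exp_gt0 _) (exp_gt0 _) (exp_gt0 _).
Qed.

Lemma ideal_pair (R0 R1 : {set F}) : R0 != R1 ->
  ideal beta [set R0; R1] R0 <-> ~ (rhoR beta R0 R1 < rhoR beta R1 R0).
Proof.
move=> R01; split=> [idR0 lt01 | nlt [R' [+ [+]]]].
  by apply: idR0; exists R1; rewrite !inE eqxx orbT eq_sym.
by rewrite !inE => /orP[] /eqP->; [rewrite eqxx | move=> _ /nlt].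
Qed.

Lemma ideal_set1_set2 i j k : j != k ->
  ideal beta [set [set i]; [set j; k]] [set i] <-> beta j + beta k <= 2 * beta i.
Proof.
move=> njk; have i_jk : [set i] != [set j; k].
  by apply/eqP => i_eq; have := cards2 j k; rewrite -i_eq cards1 njk.
rewrite ideal_pair // rhoR_lt_swap -?card_gt0 ?cards1 ?cards2 ?njk //.
rewrite rhoR_set1_set2 // pBT_set1_set2_lt_half ltNge.
by split=> [/negP/negPn | ->].
Qed.
End BradleyTerry.

Lemma disjoint_pair_family (T : finType) (A B : {set T}) : [disjoint A & B] ->
  forall R1 R2, R1 \in [set A; B] -> R2 \in [set A; B] -> R1 != R2 ->
  [disjoint R1 & R2].
Proof.
move=> AB R1 R2; rewrite !inE => /orP[] /eqP-> /orP[] /eqP->;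
  by rewrite ?eqxx // disjoint_sym.
Qed.

Definition beta_ideal (f : 'I_3) : R := nth 0 [:: 0; 1; -2] f.
Definition beta_nonideal (f : 'I_3) : R := nth 0 [:: 0; 2; -1] f.

Lemma beta_ideal_nonideal_same_order f g :
  beta_ideal f < beta_ideal g <-> beta_nonideal f < beta_nonideal g.
Proof.
rewrite /beta_ideal /beta_nonideal.
by case: f g => [[|[|[|?]]] ?] // [[|[|[|?]]] ?] //=; split=> ?; lra.
Qed.

Theorem theorem1 :
  exists (F : finType) (Rs : {set {set F}}) (R0 : {set F}) (beta beta' : F -> R),
    (forall R1, R1 \in Rs -> R1 != set0) /\
    (forall R1 R2, R1 \in Rs -> R2 \in Rs -> R1 != R2 -> [disjoint R1 & R2]) /\
    R0 \in Rs /\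
    (forall f g : F, beta f < beta g <-> beta' f < beta' g) /\
    ideal beta Rs R0 /\ ~ ideal beta' Rs R0.
Proof.
pose f0 : 'I_3 := @Ordinal 3 0 isT.
pose f1 : 'I_3 := @Ordinal 3 1 isT.
pose f2 : 'I_3 := @Ordinal 3 2 isT.
have f12 : f1 != f2 by [].
exists 'I_3, [set [set f0]; [set f1; f2]], [set f0], beta_ideal, beta_nonideal.
split.
  by move=> R1; rewrite !inE -card_gt0 => /orP[] /eqP->; rewrite ?cards1 ?cards2.
split; first by apply: disjoint_pair_family; rewrite disjoints1 !inE.
split; first by rewrite !inE eqxx.
split; first exact: beta_ideal_nonideal_same_order.
rewrite !ideal_set1_set2 // /beta_ideal /beta_nonideal /=.
by split; lra.
Qed.
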